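(* Let $\mu$ be a PU-monotone. If $A\in H_n$ and $B\in H_k$ are both neither positive semidefinite nor negative semidefinite and satisfy $\|A_+\|_\infty\geq\|B_+\|_\infty$ and $\|A_-\|_\infty\geq\|B_-\|_\infty$, then $\mu(A)\geq\mu(B)$. That is, restricted to non-definite matrices, $\mu$ is a non-decreasing function of both $\|A_+\|_\infty$ and $\|A_-\|_\infty$.
   Context: $H_n$ denotes the $n\times n$ complex Hermitian matrices. A linear map $\Phi:H_n\to H_k$ is PU if it maps positive semidefinite matrices to positive semidefinite matrices and $\Phi(\mathbb{1})=\mathbb{1}$. A function $\mu:\bigcup_{n\in\mathbb N}H_n\to\mathbb R$ is a PU-monotone if $\mu(\Phi(A))\leq\mu(A)$ for all $n,k$, all PU maps $\Phi:H_n\to H_k$ and all $A\in H_n$. Every $A$ decomposes uniquely as $A=A_+-A_-$ with $A_\pm$ positive semidefinite and $A_+A_-=0$. $\|\cdot\|_\infty$ is the operator norm. *)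

From HB Require Import structures.
From mathcomp Require Import all_boot all_order all_algebra.
From mathcomp Require Import classical_sets reals.
From mathcomp Require Import complex.
Set Implicit Arguments. Unset Strict Implicit. Unset Printing Implicit Defensive.
Import Order.TTheory GRing.Theory Num.Theory.
Local Open Scope ring_scope.
Local Open Scope classical_set_scope.

Section Defs.
Variable R : realType.
Local Notation C := (R[i]).

Definition adjmx m n (X : 'M[C]_(m, n)) : 'M[C]_(n, m) := map_mx (@conjc R) X^T.

Definition is_herm n (X : 'M[C]_n) : Prop := adjmx X = X.

Definition psd n (X : 'M[C]_n) : Prop :=
  is_herm X /\ forall v : 'cV[C]_n, 0 <= (adjmx v *m X *m v) 0 0.

Definition vnorm n (v : 'cV[C]_n) : R :=
  Num.sqrt (\sum_i (@complex.Re R (v i 0) ^+ 2 + @complex.Im R (v i 0) ^+ 2)).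

Definition opnorm m n (X : 'M[C]_(m, n)) : R :=
  sup [set vnorm (X *m v) | v in [set v : 'cV[C]_n | vnorm v <= 1]].

Definition posneg_decomp n (A Ap Am : 'M[C]_n) : Prop :=
  [/\ psd Ap, psd Am, A = Ap - Am & Ap *m Am = 0].

(* PU map H_n -> H_k, given as a map on all matrices whose restriction to
   Hermitian matrices is real-linear, lands in H_k, is positive and unital *)
Definition PU n k (Phi : 'M[C]_n -> 'M[C]_k) : Prop :=
  [/\ (forall X Y, is_herm X -> is_herm Y -> Phi (X + Y) = Phi X + Phi Y),
      (forall (r : R) X, is_herm X -> Phi (Complex r 0 *: X) = Complex r 0 *: Phi X),
      (forall X, is_herm X -> is_herm (Phi X)),
      (forall X, psd X -> psd (Phi X)) &
      Phi 1%:M = 1%:M].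

Definition PU_monotone (mu : forall n, 'M[C]_n -> R) : Prop :=
  forall n k (Phi : 'M[C]_n -> 'M[C]_k), PU Phi ->
    forall A : 'M[C]_n, is_herm A -> mu k (Phi A) <= mu n A.

End Defs.

(* Let a and b be the maximum and the minimum of <x, A x> over unit vectors x,
   attained at u and w by compactness; as A is not definite, b < 0 < a.
   Because A_- A_+ = 0, the form of A coincides with that of A_+ on the range of
   A_+, which gives ||A_+|| <= a, and likewise ||A_-|| <= -b.  Hence
   b |x|^2 <= <x, B x> <= a |x|^2, so B = a P + b Q with P = (B - b)/(a - b) and
   Q = (a - B)/(a - b) positive semidefinite and P + Q = 1.  The
   measure-and-prepare map X |-> <u, X u> P + <w, X w> Q is then PU and sends A
   to B. *)

From mathcomp Require Import all_boot all_order all_algebra.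
From mathcomp Require Import classical_sets reals complex.
From mathcomp Require Import boolp topology normedtype derive.
From mathcomp Require Import ring lra.
Import Order.TTheory GRing.Theory Num.Theory.
Import numFieldTopology.Exports.
Set Implicit Arguments. Unset Strict Implicit. Unset Printing Implicit Defensive.
Local Open Scope ring_scope.
Local Open Scope classical_set_scope.
Local Open Scope complex_scope.

Section Adjoint.
Variable R : realType.
Local Notation C := R[i].

Lemma adjmxK m n (X : 'M[C]_(m, n)) : adjmx (adjmx X) = X.
Proof. by apply/matrixP => i j; rewrite !mxE conjcK. Qed.

Lemma adjmxM m n p (X : 'M[C]_(m, n)) (Y : 'M[C]_(n, p)) :
  adjmx (X *m Y) = adjmx Y *m adjmx X.
Proof.
apply/matrixP => i j; rewrite !mxE rmorph_sum; apply: eq_bigr => l _.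
by rewrite !mxE rmorphM mulrC.
Qed.

Lemma adjmxD m n (X Y : 'M[C]_(m, n)) : adjmx (X + Y) = adjmx X + adjmx Y.
Proof. by apply/matrixP => i j; rewrite !mxE rmorphD. Qed.

Lemma adjmxN m n (X : 'M[C]_(m, n)) : adjmx (- X) = - adjmx X.
Proof. by apply/matrixP => i j; rewrite !mxE rmorphN. Qed.

Lemma adjmxZ m n a (X : 'M[C]_(m, n)) : adjmx (a *: X) = a^*%C *: adjmx X.
Proof. by apply/matrixP => i j; rewrite !mxE rmorphM. Qed.

Lemma adjmx1 n : adjmx (1%:M : 'M[C]_n) = 1%:M.
Proof. by apply/matrixP => i j; rewrite !mxE eq_sym conjc_nat. Qed.

Lemma adjmx0 m n : adjmx (0 : 'M[C]_(m, n)) = 0.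
Proof. by apply/matrixP => i j; rewrite !mxE conjc0. Qed.

Lemma is_hermN n (X : 'M[C]_n) : is_herm X -> is_herm (- X).
Proof. by rewrite /is_herm adjmxN => ->. Qed.

Lemma herm_mulmx_eq0C n (P N : 'M[C]_n) :
  is_herm P -> is_herm N -> P *m N = 0 -> N *m P = 0.
Proof. by move=> hP hN PN0; rewrite -hP -hN -adjmxM PN0 adjmx0. Qed.

End Adjoint.

Lemma quadratic_ge0_discr (R : realFieldType) (a b c : R) : 0 <= c ->
  (forall t, 0 <= a + 2 * b * t + c * t ^+ 2) -> b ^+ 2 <= a * c.
Proof.
move=> c0 h; have [c00|cn0] := eqVneq c 0.
  have [->|bn0] := eqVneq b 0; first by rewrite expr0n c00 mulr0.
  have := h (- (a + 1) / (2 * b)); rewrite c00.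
  have -> : 2 * b * (- (a + 1) / (2 * b)) = - (a + 1) by field.
  lra.
have cp : 0 < c by rewrite lt0r cn0.
have := h (- b / c).
have -> : a + 2 * b * (- b / c) + c * (- b / c) ^+ 2 = a - b ^+ 2 / c by field.
by rewrite subr_ge0 ler_pdivrMr // mulrC.
Qed.

Section Forms.
Variable R : realType.
Local Notation C := R[i].

Definition mxform n (X : 'M[C]_n) (v w : 'cV[C]_n) : C := (adjmx v *m X *m w) 0 0.
Definition qform n (X : 'M[C]_n) (v : 'cV[C]_n) : R := complex.Re (mxform X v v).
Definition sqnorm n (v : 'cV[C]_n) : R :=
  \sum_i (complex.Re (v i 0) ^+ 2 + complex.Im (v i 0) ^+ 2).

Variable n : nat.
Implicit Types (X Y : 'M[C]_n) (v w : 'cV[C]_n).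

Lemma mxformDm X Y v w : mxform (X + Y) v w = mxform X v w + mxform Y v w.
Proof. by rewrite /mxform mulmxDr mulmxDl mxE. Qed.

Lemma mxformNm X v w : mxform (- X) v w = - mxform X v w.
Proof. by rewrite /mxform mulmxN mulNmx mxE. Qed.

Lemma mxformZm a X v w : mxform (a *: X) v w = a * mxform X v w.
Proof. by rewrite /mxform -scalemxAr -scalemxAl mxE. Qed.

Lemma mxformDl X v v' w : mxform X (v + v') w = mxform X v w + mxform X v' w.
Proof. by rewrite /mxform adjmxD !mulmxDl mxE. Qed.

Lemma mxformDr X v w w' : mxform X v (w + w') = mxform X v w + mxform X v w'.
Proof. by rewrite /mxform mulmxDr mxE. Qed.

Lemma mxformZl a X v w : mxform X (a *: v) w = a^*%C * mxform X v w.
Proof. by rewrite /mxform adjmxZ -!scalemxAl mxE. Qed.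

Lemma mxformZr a X v w : mxform X v (a *: w) = a * mxform X v w.
Proof. by rewrite /mxform -scalemxAr mxE. Qed.

Lemma mxformMr X Y v w : mxform X v (Y *m w) = mxform (X *m Y) v w.
Proof. by rewrite /mxform !mulmxA. Qed.

Lemma mxformMl X Y v w : mxform X (Y *m v) w = mxform (adjmx Y *m X) v w.
Proof. by rewrite /mxform adjmxM !mulmxA. Qed.

Lemma mxform0m v w : mxform 0 v w = 0.
Proof. by rewrite /mxform mulmx0 mul0mx mxE. Qed.

Lemma mxform_conj X v w : (mxform X v w)^*%C = mxform (adjmx X) w v.
Proof.
have -> : (mxform X v w)^*%C = adjmx (adjmx v *m X *m w) 0 0.
  by rewrite /mxform /adjmx !mxE.
by rewrite !adjmxM adjmxK mulmxA.
Qed.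

Lemma herm_mxformC X v w : is_herm X -> (mxform X v w)^*%C = mxform X w v.
Proof. by rewrite mxform_conj => ->. Qed.

Lemma herm_mxformE X v : is_herm X -> mxform X v v = (qform X v)%:C.
Proof.
move=> /(herm_mxformC v v); rewrite /qform.
by case: (mxform X v v) => a b [] b0; congr Complex; lra.
Qed.

Lemma qformD X Y v : qform (X + Y) v = qform X v + qform Y v.
Proof. by rewrite /qform mxformDm raddfD. Qed.

Lemma qformN X v : qform (- X) v = - qform X v.
Proof. by rewrite /qform mxformNm raddfN. Qed.

Lemma qformZ (s : R) X v : qform X (s%:C *: v) = s ^+ 2 * qform X v.
Proof. by rewrite /qform mxformZl mxformZr; case: (mxform X v v) => a b /=; ring. Qed.

Lemma qformZm (s : R) X v : qform (s%:C *: X) v = s * qform X v.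
Proof. by rewrite /qform mxformZm; case: (mxform X v v) => a b /=; ring. Qed.

Lemma qform0 X : qform X 0 = 0.
Proof. by rewrite /qform /mxform mulmx0 mxE. Qed.

Lemma mxform1 v : mxform 1%:M v v = (sqnorm v)%:C.
Proof.
rewrite /mxform mulmx1 !mxE rmorph_sum; apply: eq_bigr => i _.
by rewrite !mxE; case: (v i 0) => a b /=; simpc; rewrite -!expr2 [b * a]mulrC subrr.
Qed.

Lemma qform1 v : qform 1%:M v = sqnorm v.
Proof. by rewrite /qform mxform1. Qed.

Lemma sqnorm_ge0 v : 0 <= sqnorm v.
Proof. by apply: sumr_ge0 => i _; rewrite addr_ge0 ?sqr_ge0. Qed.

Lemma sqnorm_eq0 v : (sqnorm v == 0) = (v == 0).
Proof.
apply/idP/eqP => [|->]; last by rewrite -qform1 qform0.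
rewrite psumr_eq0 => [/allP v0|i _]; last by rewrite addr_ge0 ?sqr_ge0.
apply/matrixP => i j; rewrite (ord1 j) mxE.
have /v0 /= := mem_index_enum i.
rewrite paddr_eq0 ?sqr_ge0 // !sqrf_eq0 => /andP[/eqP re /eqP im].
by move: (v i 0) re im => [a b] /= -> ->.
Qed.

Lemma sqnorm_gt0 v : (0 < sqnorm v) = (v != 0).
Proof. by rewrite lt0r sqnorm_eq0 sqnorm_ge0 andbT. Qed.

Lemma sqnormZ (s : R) v : sqnorm (s%:C *: v) = s ^+ 2 * sqnorm v.
Proof. by rewrite -!qform1 qformZ. Qed.

Lemma vnormE v : vnorm v = Num.sqrt (sqnorm v).
Proof. by []. Qed.

Lemma vnorm0 : vnorm (0 : 'cV[C]_n) = 0.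
Proof. by rewrite vnormE -qform1 qform0 sqrtr0. Qed.

Lemma vnorm_sqr v : vnorm v ^+ 2 = sqnorm v.
Proof. exact/sqr_sqrtr/sqnorm_ge0. Qed.

Lemma vnorm_ge0 v : 0 <= vnorm v.
Proof. exact: sqrtr_ge0. Qed.

Lemma vnormZ (s : R) v : 0 <= s -> vnorm (s%:C *: v) = s * vnorm v.
Proof.
by move=> s0; rewrite !vnormE sqnormZ sqrtrM ?sqr_ge0 // sqrtr_sqr ger0_norm.
Qed.

Lemma cV_unit_decomp v : v != 0 -> exists2 u, sqnorm u = 1 & v = (vnorm v)%:C *: u.
Proof.
move=> v0; have vn0 : vnorm v != 0 by rewrite gt_eqF // sqrtr_gt0 sqnorm_gt0.
exists ((vnorm v)^-1%:C *: v).
  by rewrite sqnormZ -vnorm_sqr -exprMn mulVf ?expr1n.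
by rewrite scalerA -rmorphM mulfV // scale1r.
Qed.

Lemma psdE X : psd X <-> is_herm X /\ forall v, 0 <= qform X v.
Proof.
split=> -[hX h]; split=> // v; last by rewrite -/(mxform X v v) herm_mxformE // lecR.
by have := h v; rewrite -/(mxform X v v) herm_mxformE // lecR.
Qed.

Lemma psd_herm X : psd X -> is_herm X.
Proof. by case. Qed.

Lemma psd_qform_ge0 X v : psd X -> 0 <= qform X v.
Proof. by case/psdE => _ ->. Qed.

Lemma psd1 : psd (1%:M : 'M[C]_n).
Proof. by apply/psdE; split=> [|v]; rewrite ?qform1 ?sqnorm_ge0 //; apply: adjmx1. Qed.

Lemma not_psd_qform_lt0 X : is_herm X -> ~ psd X -> exists v, qform X v < 0.
Proof.
move=> hX npsd; case: (pselect (exists v, qform X v < 0)) => // nex; exfalso.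
apply: npsd; apply/psdE; split=> // v; rewrite leNgt; apply/negP => lt0.
by apply: nex; exists v.
Qed.

Lemma qform_cauchy_schwarz Q v w : psd Q ->
  complex.Re (mxform Q v w) ^+ 2 <= qform Q v * qform Q w.
Proof.
move=> hQ; apply: quadratic_ge0_discr => [|t]; first exact: psd_qform_ge0.
have := psd_qform_ge0 (v + t%:C *: w) hQ.
rewrite /qform !(mxformDl, mxformDr, mxformZl, mxformZr) -(herm_mxformC v w (psd_herm hQ)).
by case: (mxform Q v w) (mxform Q v v) (mxform Q w w) => [a b] [c d] [e f] /=; nra.
Qed.

Lemma Re_mxform1_le v w : complex.Re (mxform 1%:M v w) <= vnorm v * vnorm w.
Proof.
have := qform_cauchy_schwarz v w psd1; rewrite !qform1 -!vnorm_sqr -exprMn.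
have := mulr_ge0 (vnorm_ge0 v) (vnorm_ge0 w); nra.
Qed.

End Forms.

Section OperatorNorm.
Variables (R : realType) (m n : nat) (X : 'M[R[i]]_(m, n)) (M : R).
Hypotheses (M0 : 0 <= M) (XM : forall v, vnorm (X *m v) <= M * vnorm v).

Lemma opnorm_le : opnorm X <= M.
Proof.
apply: ge_sup; first by exists (vnorm (X *m 0)), 0; rewrite //= vnorm0.
by move=> _ [v /= v1 <-]; apply: le_trans (XM v) _; rewrite ler_piMr.
Qed.

Lemma vnorm_mulmx_le_opnorm v : vnorm (X *m v) <= opnorm X * vnorm v.
Proof.
have [->|v0] := eqVneq v 0; first by rewrite mulmx0 !vnorm0 mulr0.
have [u u1 ->] := cV_unit_decomp v0.
rewrite -scalemxAr !vnormZ ?vnorm_ge0 // mulrCA ler_wpM2l ?vnorm_ge0 //.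
have vu1 : vnorm u = 1 by rewrite vnormE u1 sqrtr1.
rewrite vu1 mulr1; apply: ub_le_sup; last by exists u; rewrite //= vu1.
by exists M => _ [w /= w1 <-]; apply: le_trans (XM w) _; rewrite ler_piMr.
Qed.

End OperatorNorm.

Lemma qform_le_opnorm (R : realType) n (X : 'M[R[i]]_n) M : 0 <= M ->
    (forall v, vnorm (X *m v) <= M * vnorm v) ->
  forall v, qform X v <= opnorm X * sqnorm v.
Proof.
move=> M0 XM v; rewrite /qform -[X in mxform X]mul1mx -mxformMr.
apply: le_trans (Re_mxform1_le _ _) _.
rewrite -vnorm_sqr expr2 mulrCA ler_wpM2l ?vnorm_ge0 //.
exact: vnorm_mulmx_le_opnorm M0 XM v.
Qed.

Section PositivePart.
Variables (R : realType) (n : nat).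
Local Notation C := R[i].

(* With [r = |P v|]: Cauchy-Schwarz for the form of [P] gives
   [r^4 <= <v, P v> <P v, P^2 v> <= (|v| r) (M r^2)], because [P - N] and [P]
   have the same form at [P v]. *)
Lemma vnorm_pos_part_le (P N : 'M[C]_n) (M : R) : 0 <= M -> psd P -> N *m P = 0 ->
    (forall v, qform (P - N) v <= M * sqnorm v) ->
  forall v, vnorm (P *m v) <= M * vnorm v.
Proof.
move=> M0 hP NP0 hM v; set r := vnorm (P *m v).
have [r0|rn0] := eqVneq r 0; first by rewrite r0 mulr_ge0 ?vnorm_ge0.
have rpos : 0 < r by rewrite lt0r rn0 vnorm_ge0.
have r2E : r ^+ 2 = complex.Re (mxform P v (P *m v)).
  by rewrite vnorm_sqr -qform1 /qform mxformMl mulmx1 (psd_herm hP).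
have qPv : qform P v <= vnorm v * r.
  by rewrite /qform -[X in mxform X]mul1mx -mxformMr Re_mxform1_le.
have qPPv : qform P (P *m v) <= M * r ^+ 2.
  have qN : qform N (P *m v) = 0 by rewrite /qform mxformMr NP0 mxform0m.
  by have := hM (P *m v); rewrite qformD qformN qN subr0 vnorm_sqr.
have cs := qform_cauchy_schwarz v (P *m v) hP; rewrite -r2E in cs.
have h4 : r ^+ 3 * r <= r ^+ 3 * (M * vnorm v).
  rewrite -exprSr (_ : 4 = 2 * 2)%N // exprM; apply: le_trans cs _.
  apply: le_trans (ler_pM (psd_qform_ge0 _ hP) (psd_qform_ge0 _ hP) qPv qPPv) _.
  by have -> : vnorm v * r * (M * r ^+ 2) = r ^+ 3 * (M * vnorm v) by ring.
by rewrite ler_pM2l ?exprn_gt0 in h4.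
Qed.

Lemma opnorm_pos_part_le (P N : 'M[C]_n) (M : R) : 0 <= M -> psd P -> N *m P = 0 ->
  (forall v, qform (P - N) v <= M * sqnorm v) -> opnorm P <= M.
Proof. by move=> M0 hP NP0 hM; apply: opnorm_le M0 (vnorm_pos_part_le M0 hP NP0 hM). Qed.

End PositivePart.

Section Rayleigh.
Variables (R : realType) (n : nat).
Local Notation C := R[i].

Definition cV_of_rV (x : 'rV[R]_(n + n)) : 'cV[C]_n :=
  \col_i (x ord0 (lshift n i) +i* x ord0 (rshift n i)).

Lemma cV_of_rV_surj (v : 'cV[C]_n) : exists x, cV_of_rV x = v.
Proof.
exists (row_mx (\row_i complex.Re (v i 0)) (\row_i complex.Im (v i 0))).
apply/matrixP => i j; rewrite (ord1 j) !mxE (unsplitK (inl _ i)) (unsplitK (inr _ i)) !mxE.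
by case: (v i 0).
Qed.

Lemma sqnorm_cV_of_rV x : sqnorm (cV_of_rV x) = \sum_i x ord0 i ^+ 2.
Proof.
rewrite /sqnorm big_split_ord big_split /=.
by congr (_ + _); apply: eq_bigr => i _; rewrite !mxE.
Qed.

Lemma qform_cV_of_rVE (X : 'M[C]_n) (x : 'rV[R]_(n + n)) :
  let p i := x ord0 (lshift n i) in let q i := x ord0 (rshift n i) in
  qform X (cV_of_rV x) = \sum_j \sum_i
    (complex.Re (X i j) * (p i * p j) + complex.Re (X i j) * (q i * q j)
     + complex.Im (X i j) * (q i * p j) - complex.Im (X i j) * (p i * q j)).
Proof.
rewrite /qform /mxform mxE raddf_sum; apply: eq_bigr => j _.
rewrite mxE big_distrl raddf_sum; apply: eq_bigr => i _; rewrite !mxE.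
by case: (X i j) => a b /=; ring.
Qed.

Lemma qform_cV_of_rV_continuous (X : 'M[C]_n) :
  continuous (fun x => qform X (cV_of_rV x)).
Proof.
have cD (f g : 'rV[R]_(n + n) -> R) :
    continuous f -> continuous g -> continuous (fun x => f x + g x).
  by move=> cf cg x; exact: (@continuousD R R^o _ f g x (cf x) (cg x)).
have cB (f g : 'rV[R]_(n + n) -> R) :
    continuous f -> continuous g -> continuous (fun x => f x - g x).
  by move=> cf cg x; exact: (@continuousB R R^o _ f g x (cf x) (cg x)).
have cS (T : Type) (r : seq T) (f : T -> 'rV[R]_(n + n) -> R) :
    (forall i, continuous (f i)) -> continuous (fun x => \sum_(i <- r) f i x).
  move=> cf; apply: (@continuous_big R^o T +%R 0 xpredT) => [|i _].
    exact: add_continuous.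
  exact: cf.
have cM (c : R) (a b : 'I_(n + n)) :
    continuous (fun x : 'rV[R]_(n + n) => c * (x ord0 a * x ord0 b)).
  move=> x; apply: (continuousM (s := fun=> c)
    (t := fun y : 'rV[R]_(n + n) => y ord0 a * y ord0 b)); first exact: cst_continuous.
  by apply: continuousM; exact: coord_continuous.
under eq_fun do rewrite qform_cV_of_rVE.
apply: (cS) => j; apply: (cS) => i.
by apply: (cB); [apply: (cD); [apply: (cD)|]|]; apply: (cM).
Qed.

Lemma qform_max_ball (X : 'M[C]_n) :
  exists2 u, sqnorm u <= 1 & forall v, sqnorm v <= 1 -> qform X v <= qform X u.
Proof.
pose ball := [set x : 'rV[R]_(n + n) | sqnorm (cV_of_rV x) <= 1].
have ball0 : ball !=set0.
  by exists 0; rewrite /ball /= sqnorm_cV_of_rV big1 // => i _; rewrite mxE expr0n.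
have ball_compact : compact ball.
  pose cube := [set x : 'rV[R]_(n + n) | forall i, `[-1, 1]%classic (x ord0 i)].
  apply: (@subclosed_compact _ ball cube).
  - apply: (preimage_closed (f := fun x => sqnorm (cV_of_rV x)) (D := [set y | y <= 1])).
      by move=> x _; under eq_fun do rewrite -qform1; exact: qform_cV_of_rV_continuous.
    exact: closed_le.
  - by apply: (@rV_compact R _ (fun=> `[-1, 1]%classic)) => i; exact: segment_compact.
  - move=> x; rewrite /ball /= sqnorm_cV_of_rV => x1 i; rewrite /= in_itv /= -ler_norml.
    rewrite -(@ler_pXn2r _ 2) ?nnegrE // expr1n real_normK ?num_real //.
    apply: le_trans x1; rewrite (bigD1 i) //= lerDl.
    by apply: sumr_ge0 => j _; rewrite sqr_ge0.
have [c cball cmax] := EVT_max_rV ball0 ball_compact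
  (continuous_subspaceT (@qform_cV_of_rV_continuous X)).
exists (cV_of_rV c); first by move: cball; rewrite inE.
move=> v; have [x <- x1] := cV_of_rV_surj v.
by move: (cmax x); rewrite inE; apply.
Qed.

Lemma rayleigh_bound (X : 'M[C]_n) :
  exists2 u, sqnorm u <= 1 & forall v, qform X v <= qform X u * sqnorm v.
Proof.
have [u u1 umax] := qform_max_ball X; exists u => // v.
have [->|v0] := eqVneq v 0; first by rewrite qform0 -qform1 qform0 mulr0.
have [w w1 ->] := cV_unit_decomp v0.
by rewrite qformZ sqnormZ w1 mulr1 [qform X u * _]mulrC ler_wpM2l ?sqr_ge0 // umax ?w1.
Qed.

Lemma rayleigh_unit (X : 'M[C]_n) : (exists v, 0 < qform X v) ->
  exists u, [/\ sqnorm u = 1, 0 < qform X u & forall v, qform X v <= qform X u * sqnorm v].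
Proof.
move=> [v vpos]; have [u0 u01 u0max] := rayleigh_bound X.
have pos_of_mul (a s : R) : 0 <= s -> 0 < a * s -> 0 < a.
  by move=> s0; apply: contraTT; rewrite -!leNgt => /mulr_le0_ge0 ->.
have u0pos : 0 < qform X u0 := pos_of_mul _ _ (sqnorm_ge0 v) (lt_le_trans vpos (u0max v)).
have u0n0 : u0 != 0 by apply: contraTneq u0pos => ->; rewrite qform0 ltxx.
have [u u1 u0E] := cV_unit_decomp u0n0.
have qu0E : qform X u0 = qform X u * sqnorm u0 by rewrite {1}u0E qformZ vnorm_sqr mulrC.
have upos : 0 < qform X u by apply: pos_of_mul (sqnorm_ge0 u0) _; rewrite -qu0E.
exists u; split=> // w; apply: le_trans (u0max w) _.
by rewrite qu0E mulrAC ler_piMr // mulr_ge0 ?sqnorm_ge0 ?ltW.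
Qed.

End Rayleigh.

Lemma psd_bounded (R : realType) n (P : 'M[R[i]]_n) : psd P ->
  exists2 M, 0 <= M & forall v, vnorm (P *m v) <= M * vnorm v.
Proof.
move=> hP; have [u _ uP] := rayleigh_bound P.
exists (qform P u); first exact: psd_qform_ge0.
apply: vnorm_pos_part_le (psd_qform_ge0 u hP) hP (mul0mx _ _) _ => v.
by rewrite subr0; exact: uP.
Qed.

Lemma qform_posneg_le (R : realType) n (P N : 'M[R[i]]_n) (a : R) :
  psd P -> psd N -> opnorm P <= a -> forall v, qform (P - N) v <= a * sqnorm v.
Proof.
move=> hP hN Pa v; have [M M0 PM] := psd_bounded hP.
rewrite qformD qformN; have := psd_qform_ge0 v hN.
have := qform_le_opnorm M0 PM v; have := ler_wpM2r (sqnorm_ge0 v) Pa; lra.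
Qed.

Section MeasurePrepare.
Variables (R : realType) (n k : nat).
Local Notation C := R[i].

Lemma herm_interval_decomp (B : 'M[C]_k) (a b : R) : is_herm B -> b < a ->
    (forall v, b * sqnorm v <= qform B v) -> (forall v, qform B v <= a * sqnorm v) ->
  exists P Q, [/\ psd P, psd Q, P + Q = 1%:M & a%:C *: P + b%:C *: Q = B].
Proof.
move=> hB ba lowB upB; have d0 : 0 < (a - b)^-1 by rewrite invr_gt0 subr_gt0.
have ab : (a%:C - b%:C : C) != 0 by rewrite -rmorphB gt_eqF // ltcR subr_gt0.
have hermZ (s : R) (Y : 'M[C]_k) : is_herm Y -> is_herm (s%:C *: Y).
  by rewrite /is_herm adjmxZ conjc_real => ->.
have hermIB (s t : R) : is_herm (s%:C *: 1%:M + t%:C *: B).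
  by rewrite /is_herm adjmxD !hermZ ?hB //; apply: adjmx1.
exists ((a - b)^-1%:C *: ((- b)%:C *: 1%:M + 1%:C *: B)).
exists ((a - b)^-1%:C *: (a%:C *: 1%:M + (- 1)%:C *: B)); split.
- apply/psdE; split; first exact/hermZ/hermIB.
  move=> v; rewrite qformZm qformD !qformZm qform1 mulr_ge0 ?(ltW d0) //.
  by have := lowB v; lra.
- apply/psdE; split; first exact/hermZ/hermIB.
  move=> v; rewrite qformZm qformD !qformZm qform1 mulr_ge0 ?(ltW d0) //.
  by have := upB v; lra.
- by apply/matrixP => i j; rewrite !mxE fmorphV !rmorphN rmorphB rmorph1; field.
- by apply/matrixP => i j; rewrite !mxE fmorphV !rmorphN rmorphB rmorph1; field.
Qed.

Lemma PU_measure_prepare (u w : 'cV[C]_n) (P Q : 'M[C]_k) :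
    sqnorm u = 1 -> sqnorm w = 1 -> psd P -> psd Q -> P + Q = 1%:M ->
  PU (fun X => mxform X u u *: P + mxform X w w *: Q).
Proof.
move=> u1 w1 hP hQ PQ1.
have PhiE X : is_herm X ->
    mxform X u u *: P + mxform X w w *: Q = (qform X u)%:C *: P + (qform X w)%:C *: Q.
  by move=> hX; rewrite !herm_mxformE.
have herm_comb (s t : R) : is_herm (s%:C *: P + t%:C *: Q).
  by rewrite /is_herm adjmxD !adjmxZ !conjc_real (psd_herm hP) (psd_herm hQ).
split.
- by move=> X Y _ _; rewrite !mxformDm !scalerDl addrACA.
- by move=> r X _; rewrite !mxformZm scalerDr !scalerA.
- by move=> X hX; rewrite PhiE //; apply: herm_comb.
- move=> X hX; rewrite PhiE; last exact: psd_herm.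
  apply/psdE; split=> [|v]; first exact: herm_comb.
  by rewrite qformD !qformZm addr_ge0 ?mulr_ge0 ?psd_qform_ge0.
- by rewrite !mxform1 u1 w1 !scale1r.
Qed.

End MeasurePrepare.

Theorem mainTheorem10 (R : realType) (mu : forall n, 'M[R[i]]_n -> R)
  (hmu : PU_monotone mu) (n k : nat) (A Ap Am : 'M[R[i]]_n) (B Bp Bm : 'M[R[i]]_k) :
  is_herm A -> is_herm B ->
  ~ psd A -> ~ psd (- A) -> ~ psd B -> ~ psd (- B) ->
  posneg_decomp A Ap Am -> posneg_decomp B Bp Bm ->
  opnorm Bp <= opnorm Ap -> opnorm Bm <= opnorm Am ->
  mu k B <= mu n A.
Proof.
move=> hA hB nA nAN _ _ [hAp hAm eA ApAm] [hBp hBm eB _] BAp BAm.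
have [v Av] := not_psd_qform_lt0 (is_hermN hA) nAN.
have [w Aw] := not_psd_qform_lt0 hA nA.
rewrite qformN oppr_lt0 in Av; rewrite -oppr_gt0 -qformN in Aw.
have [u [u1 upos uA]] := rayleigh_unit (ex_intro _ v Av).
have [u' [u'1 u'pos u'A]] := rayleigh_unit (ex_intro _ w Aw).
have AmAp : Am *m Ap = 0 by apply: herm_mulmx_eq0C (psd_herm hAp) (psd_herm hAm) ApAm.
have opAp : opnorm Ap <= qform A u.
  by apply: opnorm_pos_part_le (ltW upos) hAp AmAp _; rewrite -eA.
have opAm : opnorm Am <= qform (- A) u'.
  by apply: opnorm_pos_part_le (ltW u'pos) hAm ApAm _; rewrite -opprB -eA.
have upB v' : qform B v' <= qform A u * sqnorm v'.
  by rewrite eB; apply: qform_posneg_le hBp hBm (le_trans BAp opAp) v'.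
have lowB v' : qform A u' * sqnorm v' <= qform B v'.
  have := qform_posneg_le hBm hBp (le_trans BAm opAm) v'.
  by rewrite eB -opprB !qformN mulNr lerN2.
rewrite qformN oppr_gt0 in u'pos.
have [P [Q [hP hQ PQ1 PQB]]] := herm_interval_decomp hB (lt_trans u'pos upos) lowB upB.
have := hmu _ _ _ (PU_measure_prepare u1 u'1 hP hQ PQ1) A hA.
by rewrite !herm_mxformE // PQB.
Qed.
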